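(* Let $A$ be a Prüfer domain with Noetherian prime spectrum (for example, a Dedekind domain), and let $B$ be an overring of $A$ finitely generated as an $A$-algebra. The following are equivalent: (1) $B$ is a localization of $A$; (2) $B$ is well-centered on $A$; (3) $B$ is almost well-centered on $A$.
   Context: For an integral domain $A$ with field of fractions $K$, an overring is a subring $B$ of $K$ containing $A$. $B$ is a localization of $A$ if $B=S^{-1}A$ for a multiplicatively closed set $S$ of nonzero elements of $A$. $B$ is well-centered on $A$ if for each $b\in B$ there is a unit $u$ of $B$ with $ub\in A$; $B$ is almost well-centered on $A$ if for each $b\in B$ there exist a positive integer $n$ and a unit $u$ of $B$ with $ub^n\in A$. *)

(* All rings are subrings of a fixed field K, represented as
   predicates (K -> Prop); K plays the role of the fraction field of A. *)
From mathcomp Require Import all_boot all_algebra.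
Set Implicit Arguments. Unset Strict Implicit. Unset Printing Implicit Defensive.
Import GRing.Theory.
Local Open Scope ring_scope.

Section Defs.
Variable K : fieldType.

(* R is a (unital) subring of K; in particular R is an integral domain. *)
Definition subring (R : K -> Prop) : Prop :=
  R 0 /\ R 1 /\ (forall x y, R x -> R y -> R (x - y)) /\
  (forall x y, R x -> R y -> R (x * y)).

Definition is_fraction_field (A : K -> Prop) : Prop :=
  forall x : K, exists a b, A a /\ A b /\ b != 0 /\ x = a / b.

Definition overring (A B : K -> Prop) : Prop :=
  subring B /\ (forall x, A x -> B x).

Definition ideal (A I : K -> Prop) : Prop :=
  (forall x, I x -> A x) /\ I 0 /\ (forall x y, I x -> I y -> I (x + y)) /\
  (forall a x, A a -> I x -> I (a * x)).

Definition fg_ideal (A I : K -> Prop) : Prop :=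
  exists (n : nat) (g : 'I_n -> K), (forall i, A (g i)) /\
    (forall x, I x <-> exists c : 'I_n -> K, (forall i, A (c i)) /\
                                    x = \sum_(i < n) c i * g i).

Definition prod_set (I J : K -> Prop) (x : K) : Prop :=
  exists (n : nat) (a b : 'I_n -> K), (forall i, I (a i) /\ J (b i)) /\
    x = \sum_(i < n) a i * b i.

Definition invertible (A I : K -> Prop) : Prop :=
  exists J : K -> Prop,
    J 0 /\ (forall x y, J x -> J y -> J (x + y)) /\
    (forall a x, A a -> J x -> J (a * x)) /\
    (forall x, prod_set I J x <-> A x).

Definition prufer (A : K -> Prop) : Prop :=
  forall I, ideal A I -> fg_ideal A I -> (exists x, I x /\ x != 0) ->
    invertible A I.

(* Noetherian prime spectrum: Spec A is a Noetherian space, i.e. (closed sets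
   of Spec A <-> radical ideals, order-reversing) ACC on radical ideals. *)
Definition radical_ideal (A I : K -> Prop) : Prop :=
  ideal A I /\ (forall x (n : nat), A x -> I (x ^+ n) -> I x).

Definition noetherian_spectrum (A : K -> Prop) : Prop :=
  forall I : nat -> K -> Prop,
    (forall n, radical_ideal A (I n)) ->
    (forall n x, I n x -> I n.+1 x) ->
    exists N : nat, forall n x, (N <= n)%N -> I n x -> I N x.

Inductive adjoin (A : K -> Prop) (s : seq K) : K -> Prop :=
  | adj_base a : A a -> adjoin A s a
  | adj_gen x : x \in s -> adjoin A s x
  | adj_opp x : adjoin A s x -> adjoin A s (- x)
  | adj_add x y : adjoin A s x -> adjoin A s y -> adjoin A s (x + y)
  | adj_mul x y : adjoin A s x -> adjoin A s y -> adjoin A s (x * y).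

Definition fg_algebra (A B : K -> Prop) : Prop :=
  exists s : seq K, forall x, B x <-> adjoin A s x.

Definition unit_of (B : K -> Prop) (u : K) : Prop :=
  B u /\ u != 0 /\ B u^-1.

Definition localization_of (A B : K -> Prop) : Prop :=
  exists S : K -> Prop,
    (forall s, S s -> A s /\ s != 0) /\ S 1 /\
    (forall s t, S s -> S t -> S (s * t)) /\
    (forall x, B x <-> exists a s, A a /\ S s /\ x = a / s).

Definition well_centered (A B : K -> Prop) : Prop :=
  forall b, B b -> exists u, unit_of B u /\ A (u * b).

Definition almost_well_centered (A B : K -> Prop) : Prop :=
  forall b, B b -> exists (n : nat) u, (0 < n)%N /\ unit_of B u /\ A (u * b ^+ n).

End Defs.

(* Localizations are well centered and well-centered overrings are almost well
   centered; the content is (3) => (1).  For a prime P of the Prufer domain A the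
   ring A_P is a valuation ring.  Let R be the radical ideal of those d in A with
   B contained in A[1/d].  As Spec A is Noetherian, R = P_1 /\ ... /\ P_k for
   finitely many primes, and as B is finitely generated, B is contained in no
   A_(P_i).  Since the A_(P_i) are valuation rings, some single b in B lies
   outside all of them.  Almost well-centredness gives a unit u of B with
   u b^n in A, and comparing valuations shows that u lies in A and in every P_i,
   hence in R.  Then B = A[1/u]. *)
From mathcomp Require Import all_boot all_algebra.
From mathcomp Require Import ring zify.
From Stdlib Require Import Classical ClassicalEpsilon.
Set Implicit Arguments. Unset Strict Implicit. Unset Printing Implicit Defensive.
Import GRing.Theory.
Local Open Scope ring_scope.

Section Overrings.
Variable K : fieldType.
Implicit Types (A B I J M P Q : K -> Prop) (a b c s t u x y z : K).

Lemma subring0 A : subring A -> A 0. Proof. by case. Qed.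

Lemma subring1 A : subring A -> A 1. Proof. by case=> _ []. Qed.

Lemma subringB A x y : subring A -> A x -> A y -> A (x - y).
Proof. by case=> _ [_ [AB _]]; apply: AB. Qed.

Lemma subringM A x y : subring A -> A x -> A y -> A (x * y).
Proof. by case=> _ [_ [_ AM]]; apply: AM. Qed.

Lemma subringN A x : subring A -> A x -> A (- x).
Proof. by move=> HA Ax; rewrite -sub0r; exact: subringB HA (subring0 HA) Ax. Qed.

Lemma subringD A x y : subring A -> A x -> A y -> A (x + y).
Proof. by move=> HA Ax Ay; rewrite -[y]opprK; exact: subringB HA Ax (subringN HA Ay). Qed.

Lemma subringX A x n : subring A -> A x -> A (x ^+ n).
Proof.
move=> HA Ax; elim: n => [|n IH]; first by rewrite expr0; exact: subring1 HA.
by rewrite exprS; exact: subringM HA Ax IH.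
Qed.

Lemma ideal_sub A I x : ideal A I -> I x -> A x.
Proof. by case=> Isub _; apply: Isub. Qed.

Lemma ideal0 A I : ideal A I -> I 0. Proof. by case=> _ []. Qed.

Lemma idealD A I x y : ideal A I -> I x -> I y -> I (x + y).
Proof. by case=> _ [_ [ID _]]; apply: ID. Qed.

Lemma idealMl A I a x : ideal A I -> A a -> I x -> I (a * x).
Proof. by case=> _ [_ [_ IM]]; apply: IM. Qed.

Lemma idealMr A I a x : ideal A I -> A a -> I x -> I (x * a).
Proof. by move=> HI Aa Ix; rewrite mulrC; exact: idealMl HI Aa Ix. Qed.

Lemma idealX A I x n : subring A -> ideal A I -> I x -> (0 < n)%N -> I (x ^+ n).
Proof.
move=> HA HI Ix; case: n => // n _; rewrite exprSr.
exact: idealMl HI (subringX n HA (ideal_sub HI Ix)) Ix.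
Qed.

Definition submodule A M :=
  M 0 /\ (forall x y, M x -> M y -> M (x + y)) /\ (forall a x, A a -> M x -> M (a * x)).

Lemma submodule_natmul A M x k : submodule A M -> M x -> M (x *+ k).
Proof.
case=> M0 [MD _] Mx; elim: k => [|k IH]; first by rewrite mulr0n.
by rewrite mulrS; exact: MD.
Qed.

Lemma submodule_exprD A M x y m n : subring A -> submodule A M -> A x -> A y ->
  M (x ^+ m) -> M (y ^+ n) -> M ((x + y) ^+ (m + n)).
Proof.
move=> HA HM Ax Ay Mx My; have [M0 [MD MM]] := HM.
rewrite exprDn; apply: big_ind => // -[i /= _] _; apply: submodule_natmul HM _.
have [ltin|leni] := ltnP i n.
  have -> : (m + n - i = n - i + m)%N by lia.
  rewrite exprD mulrAC; apply: MM Mx.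
  exact: subringM HA (subringX _ HA Ax) (subringX _ HA Ay).
rewrite -[in y ^+ i](subnK leni) exprD mulrA; apply: MM My.
exact: subringM HA (subringX _ HA Ax) (subringX _ HA Ay).
Qed.

Lemma radical_ideal_meet (T : Type) A (D : T -> Prop) (F : T -> K -> Prop) :
  subring A -> (forall i, D i -> radical_ideal A (F i)) ->
  radical_ideal A (fun z => A z /\ forall i, D i -> F i z).
Proof.
move=> HA HF; split; [split; [|split; [|split]]|].
- by move=> z [].
- by split=> [|i Di]; [exact: subring0 HA | exact: ideal0 (HF i Di).1].
- move=> x y [Ax Fx] [Ay Fy]; split=> [|i Di]; first exact: subringD HA Ax Ay.
  exact: idealD (HF i Di).1 (Fx i Di) (Fy i Di).
- move=> a x Aa [Ax Fx]; split=> [|i Di]; first exact: subringM HA Aa Ax.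
  exact: idealMl (HF i Di).1 Aa (Fx i Di).
- move=> x k Ax [_ Fxk]; split=> // i Di.
  exact: (HF i Di).2 x k Ax (Fxk i Di).
Qed.

Definition den_radical A x z := A z /\ exists m, A (z ^+ m * x).

Lemma den_radical_radical A x : subring A -> radical_ideal A (den_radical A x).
Proof.
move=> HA; split; [split; [|split; [|split]]|].
- by move=> z [].
- split; first exact: subring0 HA.
  by exists 1%N; rewrite expr1 mul0r; exact: subring0 HA.
- move=> y z [Ay [m Aym]] [Az [k Azk]]; split; first exact: subringD HA Ay Az.
  exists (m + k)%N.
  apply: (@submodule_exprD A (fun v => A (v * x)) y z m k HA _ Ay Az Aym Azk).
  split; first by rewrite /= mul0r; exact: subring0 HA.
  split=> [v w Av Aw | c v Ac Av]; first by rewrite mulrDl; exact: subringD HA Av Aw.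
  by rewrite -mulrA; exact: subringM HA Ac Av.
- move=> c z Ac [Az [m Azm]]; split; first exact: subringM HA Ac Az.
  by exists m; rewrite exprMn -mulrA; exact: subringM HA (subringX m HA Ac) Azm.
- move=> z k Az [_ [m Azkm]]; split=> //.
  by exists (k * m)%N; rewrite exprM.
Qed.

(* The ideal R: those d in A with B contained in A[1/d]. *)
Definition common_den_radical A B z := A z /\ forall b, B b -> den_radical A b z.

Lemma common_den_radical_radical A B : subring A -> radical_ideal A (common_den_radical A B).
Proof. by move=> HA; apply: radical_ideal_meet => // b _; exact: den_radical_radical. Qed.

Definition prime_ideal A P :=
  ideal A P /\ ~ P 1 /\ (forall x y, A x -> A y -> P (x * y) -> P x \/ P y).

Lemma prime_idealM_notin A P x y : prime_ideal A P -> A x -> A y ->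
  ~ P x -> ~ P y -> ~ P (x * y).
Proof. by case=> _ [_ PM] Ax Ay nPx nPy /(PM _ _ Ax Ay) []. Qed.

Lemma prime_ideal_expr A P x n : subring A -> prime_ideal A P -> A x -> P (x ^+ n) -> P x.
Proof.
move=> HA HP Ax; elim: n => [|n IH]; first by rewrite expr0 => /HP.2.1.
by rewrite exprS => /(HP.2.2 _ _ Ax (subringX n HA Ax)) [].
Qed.

Lemma prime_idealX_notin A P x n : subring A -> prime_ideal A P -> A x ->
  ~ P x -> ~ P (x ^+ n).
Proof. by move=> HA HP Ax nPx /(prime_ideal_expr HA HP Ax). Qed.

Definition loc_at A P y := exists s, A s /\ ~ P s /\ A (s * y).

Lemma loc_at_base A P x : subring A -> prime_ideal A P -> A x -> loc_at A P x.
Proof.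
move=> HA HP Ax; exists 1; split; first exact: subring1 HA.
by split; [exact: HP.2.1 | rewrite mul1r].
Qed.

Lemma loc_at_subring A P : subring A -> prime_ideal A P -> subring (loc_at A P).
Proof.
move=> HA HP; split; first exact: loc_at_base HA HP (subring0 HA).
split; first exact: loc_at_base HA HP (subring1 HA).
split=> x y [s [As [nPs Asx]]] [t [At [nPt Aty]]].
- exists (s * t); split; first exact: subringM HA As At.
  split; first exact: prime_idealM_notin HP As At nPs nPt.
  have -> : s * t * (x - y) = t * (s * x) - s * (t * y) by ring.
  exact: subringB HA (subringM HA At Asx) (subringM HA As Aty).
- exists (s * t); split; first exact: subringM HA As At.
  split; first exact: prime_idealM_notin HP As At nPs nPt.
  have -> : s * t * (x * y) = (s * x) * (t * y) by ring.
  exact: subringM HA Asx Aty.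
Qed.

Lemma loc_at_anti A P Q y : (forall x, P x -> Q x) -> loc_at A Q y -> loc_at A P y.
Proof. by move=> PQ [s [As [nQs Asy]]]; exists s; split=> //; split=> // /PQ. Qed.

Section Prufer.
Variables (A : K -> Prop) (HA : subring A).

Definition ideal2 a b x := exists r1 r2, A r1 /\ A r2 /\ x = r1 * a + r2 * b.

Lemma ideal2_l a b : ideal2 a b a.
Proof. by exists 1, 0; split; [exact: subring1 HA | split; [exact: subring0 HA | ring]]. Qed.

Lemma ideal2_r a b : ideal2 a b b.
Proof. by exists 0, 1; split; [exact: subring0 HA | split; [exact: subring1 HA | ring]]. Qed.

Lemma ideal2_ideal a b : A a -> A b -> ideal A (ideal2 a b).
Proof.
move=> Aa Ab; split.
  by move=> _ [r1 [r2 [A1 [A2 ->]]]]; exact: subringD HA (subringM HA A1 Aa) (subringM HA A2 Ab).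
split; first by exists 0, 0; split; [exact: subring0 HA | split; [exact: subring0 HA | ring]].
split.
  move=> _ _ [r1 [r2 [A1 [A2 ->]]]] [r3 [r4 [A3 [A4 ->]]]].
  exists (r1 + r3), (r2 + r4); split; [exact: subringD HA A1 A3 | split; [exact: subringD HA A2 A4 | ring]].
move=> c _ Ac [r1 [r2 [A1 [A2 ->]]]].
by exists (c * r1), (c * r2); split; [exact: subringM HA Ac A1 | split; [exact: subringM HA Ac A2 | ring]].
Qed.

Lemma ideal2_fg a b : A a -> A b -> fg_ideal A (ideal2 a b).
Proof.
move=> Aa Ab; exists 2%N, (fun i : 'I_2 => if val i == 0%N then a else b).
split=> [[[|i] _] // | x]; split.
  move=> [r1 [r2 [A1 [A2 ->]]]].
  exists (fun i : 'I_2 => if val i == 0%N then r1 else r2); split; first by case=> -[].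
  by rewrite !big_ord_recl big_ord0 addr0.
move=> [c [Ac ->]]; exists (c ord0), (c (lift ord0 ord0)).
by rewrite !big_ord_recl big_ord0 addr0.
Qed.

Lemma prod_set_ideal2 a b J x : submodule A J -> prod_set (ideal2 a b) J x ->
  exists j1 j2, J j1 /\ J j2 /\ x = a * j1 + b * j2.
Proof.
move=> [J0 [JD JM]] [k [al [be [H ->]]]]; elim: k al be H => [|k IH] al be H.
  by exists 0, 0; rewrite big_ord0 !mulr0 addr0.
rewrite big_ord_recr /=.
have [j1 [j2 [J1 [J2 ->]]]] := IH (fun i => al (widen_ord (leqnSn k) i))
  (fun i => be (widen_ord (leqnSn k) i)) (fun i => H _).
have [[r1 [r2 [A1 [A2 ->]]]] Jbe] := H ord_max.
exists (j1 + r1 * be ord_max), (j2 + r2 * be ord_max).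
by split; [apply: JD J1 (JM _ _ A1 Jbe) | split; [apply: JD J2 (JM _ _ A2 Jbe) | ring]].
Qed.

Hypotheses (Hff : is_fraction_field A) (Hpr : prufer A).

(* The two-generated ideal (a, b) with y = a / b is invertible:
   1 = a j1 + b j2 with j1, j2 in (a, b)^-1, and t = b j2 works. *)
Lemma prufer_split y : y != 0 -> exists t, A t /\ A (t * y) /\ A ((1 - t) / y).
Proof.
move=> y0; have [a [b [Aa [Ab [b0 Ey]]]]] := Hff y.
have a0 : a != 0 by apply: contraNneq y0 => a0; rewrite Ey a0 mul0r.
have [J [J0 [JD [JM HJ]]]] := Hpr (ideal2_ideal Aa Ab) (ideal2_fg Aa Ab)
  (ex_intro _ a (conj (ideal2_l a b) a0)).
have IJ x z : ideal2 a b x -> J z -> A (x * z).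
  move=> Ix Jz; apply/HJ; exists 1%N, (fun=> x), (fun=> z).
  by split=> //; rewrite big_ord1.
have [j1 [j2 [J1 [J2 E]]]] := prod_set_ideal2 (conj J0 (conj JD JM)) ((HJ 1).2 (subring1 HA)).
exists (b * j2); split; first exact: IJ (ideal2_r a b) J2.
split.
  have -> : b * j2 * y = a * j2 by rewrite Ey; field.
  exact: IJ (ideal2_l a b) J2.
have -> : (1 - b * j2) / y = b * j1.
  have -> : 1 - b * j2 = a * j1 by rewrite E; ring.
  by rewrite Ey; field; apply/andP.
exact: IJ (ideal2_r a b) J1.
Qed.

Section Valuation.
Variables (P : K -> Prop) (HP : prime_ideal A P).

Lemma loc_at_valuation y : ~ loc_at A P y ->
  y != 0 /\ exists s, A s /\ ~ P s /\ P (s / y).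
Proof.
move=> ny; have y0 : y != 0.
  by apply/negP => /eqP y0; apply: ny; rewrite y0; exact: loc_at_base HA HP (subring0 HA).
split=> //; have [t [At [Aty At']]] := prufer_split y0.
have Pt : P t by apply: NNPP => nPt; apply: ny; exists t.
have nP1t : ~ P (1 - t).
  by move=> P1t; apply: HP.2.1; have := idealD HP.1 P1t Pt; rewrite subrK.
exists (1 - t); split; first exact: subringB HA (subring1 HA) At.
split=> //; apply: NNPP => nP; apply: ny; exists ((1 - t) / y).
by split=> //; split=> //; rewrite divfK //; exact: subringB HA (subring1 HA) At.
Qed.

Lemma notin_loc_at_subX y m n : ~ loc_at A P y -> (m < n)%N ->
  ~ loc_at A P (y ^+ n - y ^+ m).
Proof.
move=> ny ltmn [c [Ac [nPc Acy]]].
have [y0 [s [As [nPs Psy]]]] := loc_at_valuation ny.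
have [d En] : exists d, n = (m + d.+1)%N by exists (n - m).-1; lia.
apply: (prime_idealM_notin HP Ac (subringX n HA As) nPc (prime_idealX_notin HA HP As nPs)).
have -> : c * s ^+ n =
    c * (y ^+ n - y ^+ m) * (s / y) ^+ n + c * s ^+ m * (s / y) ^+ d.+1.
  by rewrite En !exprMn !exprVn !exprD; field; rewrite !expf_neq0.
apply: idealD HP.1 (idealMl HP.1 Acy (idealX HA HP.1 Psy _)) _; first by rewrite En addnS.
exact: idealMl HP.1 (subringM HA Ac (subringX m HA As)) (idealX HA HP.1 Psy _).
Qed.

Lemma notin_loc_atX y n : ~ loc_at A P y -> (0 < n)%N -> ~ loc_at A P (y ^+ n).
Proof.
move=> ny n0 Lyn; apply: (notin_loc_at_subX (m := 0) ny n0); rewrite expr0.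
exact: subringB (loc_at_subring HA HP) Lyn (loc_at_base HA HP (subring1 HA)).
Qed.

Lemma loc_at_addX_uniq b y m n : ~ loc_at A P b -> (m < n)%N ->
  loc_at A P (b + y ^+ m) -> loc_at A P (b + y ^+ n) -> False.
Proof.
move=> nb ltmn Lm Ln; have HL := loc_at_subring HA HP.
have [Ly|ny] := classic (loc_at A P y).
  by apply: nb; rewrite -(addrK (y ^+ m) b); exact: subringB HL Lm (subringX m HL Ly).
apply: (notin_loc_at_subX ny ltmn).
have -> : y ^+ n - y ^+ m = (b + y ^+ n) - (b + y ^+ m) by ring.
exact: subringB HL Ln Lm.
Qed.

Lemma eventually_notin_loc_at b y : ~ loc_at A P b ->
  exists N, forall m, (N <= m)%N -> ~ loc_at A P (b + y ^+ m).
Proof.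
move=> nb; have [[m0 Lm0]|none] := classic (exists m0, loc_at A P (b + y ^+ m0)).
  by exists m0.+1 => m ltm Lm; exact: loc_at_addX_uniq nb ltm Lm0 Lm.
by exists 0%N => m _ Lm; apply: none; exists m.
Qed.

Lemma notin_loc_at_mulX b u n : ~ loc_at A P b -> (0 < n)%N -> A (u * b ^+ n) ->
  exists s, A s /\ ~ P s /\ P (s ^+ n * u).
Proof.
move=> nb n0 Aubn; have [b0 [s [As [nPs Psb]]]] := loc_at_valuation nb.
exists s; split=> //; split=> //.
have -> : s ^+ n * u = (u * b ^+ n) * (s / b) ^+ n.
  by rewrite exprMn exprVn; field; rewrite expf_neq0.
exact: idealMl HP.1 Aubn (idealX HA HP.1 Psb n0).
Qed.

End Valuation.

Lemma eventually_notin_loc_at_all (L : list (K -> Prop)) b y :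
  (forall Q, List.In Q L -> prime_ideal A Q /\ ~ loc_at A Q b) ->
  exists N, forall m, (N <= m)%N -> forall Q, List.In Q L -> ~ loc_at A Q (b + y ^+ m).
Proof.
elim: L => [|Q L IH] HL; first by exists 0%N.
have [N HN] := IH (fun Q' HQ' => HL Q' (or_intror HQ')).
have [HQ nbQ] := HL Q (or_introl erefl).
have [NQ HNQ] := eventually_notin_loc_at HQ y nbQ.
exists (maxn N NQ) => m; rewrite geq_max => /andP[leM leMQ] Q' [<-|HQ'].
  exact: HNQ.
exact: HN.
Qed.

Lemma loc_at_avoid B (HB : subring B) (L : list (K -> Prop)) :
  (forall P, List.In P L -> prime_ideal A P /\ exists y, B y /\ ~ loc_at A P y) ->
  exists b, B b /\ forall P, List.In P L -> ~ loc_at A P b.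
Proof.
elim: L => [|P L IH] HL; first by exists 0; split=> //; exact: subring0 HB.
have [b [Bb nb]] := IH (fun Q HQ => HL Q (or_intror HQ)).
have [HP [y [By ny]]] := HL P (or_introl erefl).
have [Pb|nPb] := classic (loc_at A P b); last first.
  by exists b; split=> // Q [<-|HQ]; [exact: nPb | exact: nb].
have [N HN] := eventually_notin_loc_at_all y
  (fun Q HQ => conj (HL Q (or_intror HQ)).1 (nb Q HQ)).
pose m := maxn N 1.
exists (b + y ^+ m); split; first exact: subringD HB Bb (subringX m HB By).
move=> Q [<-|HQ]; last by apply: HN => //; exact: leq_maxl.
move=> Pbm; apply: (notin_loc_atX HP ny (leq_maxr N 1)).
have -> : y ^+ m = (b + y ^+ m) - b by ring.
exact: subringB (loc_at_subring HA HP) Pbm Pb.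
Qed.

End Prufer.

Section NoetherianSpectrum.
Variables (A : K -> Prop) (HA : subring A).

Lemma meet_notin_prime (L : list (K -> Prop)) Q : prime_ideal A Q ->
  (forall P, List.In P L -> ideal A P) ->
  (forall P, List.In P L -> exists p, P p /\ ~ Q p) ->
  exists x, A x /\ (forall P, List.In P L -> P x) /\ ~ Q x.
Proof.
move=> HQ; elim: L => [|P L IH] HL Hp.
  by exists 1; split; [exact: subring1 HA | split=> //; exact: HQ.2.1].
have [x [Ax [Lx nQx]]] :=
  IH (fun P' H => HL P' (or_intror H)) (fun P' H => Hp P' (or_intror H)).
have [p [Pp nQp]] := Hp P (or_introl erefl).
have HP := HL P (or_introl erefl); have Ap := ideal_sub HP Pp.
exists (p * x); split; first exact: subringM HA Ap Ax.
split; last exact: prime_idealM_notin HQ Ap Ax nQp nQx.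
move=> P' [<-|H]; first exact: idealMr HP Ax Pp.
exact: idealMl (HL P' (or_intror H)) Ap (Lx P' H).
Qed.

Lemma prime_ideal_over_meet (L : list (K -> Prop)) Q : prime_ideal A Q ->
  (forall P, List.In P L -> ideal A P) ->
  (forall x, A x -> (forall P, List.In P L -> P x) -> Q x) ->
  exists2 P, List.In P L & forall x, P x -> Q x.
Proof.
move=> HQ HL HLQ; apply: NNPP => none.
have [|x [Ax [Lx nQx]]] := meet_notin_prime HQ HL.
  move=> P HP; apply: NNPP => nP; apply: none; exists P => // x Px.
  by apply: NNPP => nQx; apply: nP; exists x.
exact: nQx (HLQ x Ax Lx).
Qed.

Definition rad_add J a z := A z /\ exists n j r, J j /\ A r /\ z ^+ n = j + r * a.

Lemma rad_add_radical J a : ideal A J -> radical_ideal A (rad_add J a).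
Proof.
move=> HJ; pose M v := exists j r, J j /\ A r /\ v = j + r * a.
have HM : submodule A M.
  split; first by exists 0, 0; split; [exact: ideal0 HJ | split; [exact: subring0 HA | ring]].
  split=> [_ _ [j1 [r1 [J1 [A1 ->]]]] [j2 [r2 [J2 [A2 ->]]]] | c _ Ac [j [r [Jj [Ar ->]]]]].
    exists (j1 + j2), (r1 + r2).
    by split; [exact: idealD HJ J1 J2 | split; [exact: subringD HA A1 A2 | ring]].
  exists (c * j), (c * r).
  by split; [exact: idealMl HJ Ac Jj | split; [exact: subringM HA Ac Ar | ring]].
split; [split; [|split; [|split]]|].
- by move=> z [].
- split; first exact: subring0 HA.
  exists 1%N, 0, 0; split; first exact: ideal0 HJ.
  by split; [exact: subring0 HA | rewrite expr1 mul0r addr0].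
- move=> y z [Ay [m [j [r [Jj [Ar Ey]]]]]] [Az [k [j' [r' [Jj' [Ar' Ez]]]]]].
  split; first exact: subringD HA Ay Az.
  have [j1 [r1 [J1 [A1 E]]]] : M ((y + z) ^+ (m + k)).
    by apply: submodule_exprD HA HM Ay Az _ _; [exists j, r | exists j', r'].
  by exists (m + k)%N, j1, r1.
- move=> c z Ac [Az [m [j [r [Jj [Ar Ez]]]]]].
  split; first exact: subringM HA Ac Az.
  exists m, (c ^+ m * j), (c ^+ m * r).
  split; first exact: idealMl HJ (subringX m HA Ac) Jj.
  by split; [exact: subringM HA (subringX m HA Ac) Ar | rewrite exprMn Ez; ring].
- move=> z k Az [_ [m [j [r [Jj [Ar Ez]]]]]]; split=> //.
  by exists (k * m)%N, j, r; rewrite exprM.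
Qed.

Lemma rad_add_sub J a : ideal A J -> forall z, J z -> rad_add J a z.
Proof.
move=> HJ z Jz; split; first exact: ideal_sub HJ Jz.
exists 1%N, z, 0; split=> //.
by split; [exact: subring0 HA | rewrite expr1 mul0r addr0].
Qed.

Lemma rad_add_gen J a : ideal A J -> A a -> rad_add J a a.
Proof.
move=> HJ Aa; split=> //; exists 1%N, 0, 1; split; first exact: ideal0 HJ.
by split; [exact: subring1 HA | rewrite expr1 mul1r add0r].
Qed.

Lemma rad_add_meet J x y z : radical_ideal A J -> A x -> A y -> J (x * y) ->
  rad_add J x z -> rad_add J y z -> J z.
Proof.
move=> [HJ HJr] Ax Ay Jxy [Az [m [j [r [Jj [Ar Ex]]]]]] [_ [k [j' [r' [Jj' [Ar' Ey]]]]]].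
apply: (HJr z (m + k)%N Az).
have -> : z ^+ (m + k) = j * (j' + r' * y) + r * (x * j') + (r * r') * (x * y).
  by rewrite exprD Ex Ey; ring.
apply: (idealD HJ); first apply: (idealD HJ).
- exact: idealMr HJ (subringD HA (ideal_sub HJ Jj') (subringM HA Ar' Ay)) Jj.
- exact: idealMl HJ Ar (idealMl HJ Ax Jj').
- exact: idealMl HJ (subringM HA Ar Ar') Jxy.
Qed.

Hypothesis HN : noetherian_spectrum A.

(* A radical ideal violating Pr would start an infinite strictly ascending
   chain of radical ideals violating Pr, built with a choice function. *)
Lemma noetherian_induction (Pr : (K -> Prop) -> Prop) :
  (forall J, radical_ideal A J ->
     (forall J', radical_ideal A J' -> (forall x, J x -> J' x) ->
        (exists x, J' x /\ ~ J x) -> Pr J') -> Pr J) ->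
  forall J, radical_ideal A J -> Pr J.
Proof.
move=> IH J0 HJ0; apply: NNPP => nP0.
pose bad J := radical_ideal A J /\ ~ Pr J.
pose above J J' := bad J' /\ (forall x, J x -> J' x) /\ exists x, J' x /\ ~ J x.
pose next J := epsilon (inhabits J0) (above J).
have next_above J : bad J -> above J (next J).
  move=> [HJ nPJ]; apply: (epsilon_spec (inhabits J0) (above J)).
  apply: NNPP => none; apply: nPJ; apply: IH => // J' HJ' JJ' strict.
  by apply: NNPP => nPJ'; apply: none; exists J'.
pose chain n := iter n next J0.
have chain_bad n : bad (chain n).
  by elim: n => [|n IHn]; [split | exact: (next_above _ IHn).1].
have [N HNc] := HN (I := chain) (fun n => (chain_bad n).1) (fun n => (next_above _ (chain_bad n)).2.1).
have [_ [_ [x [Nx nNx]]]] := next_above _ (chain_bad N).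
exact: nNx (HNc N.+1 x (leqnSn N) Nx).
Qed.

Lemma radical_ideal_decomp J : radical_ideal A J -> exists L : list (K -> Prop),
  (forall P, List.In P L -> prime_ideal A P) /\
  (forall x, J x <-> A x /\ forall P, List.In P L -> P x).
Proof.
move: J; apply: noetherian_induction => J HJr IH; have [HJ _] := HJr.
have [J1|nJ1] := classic (J 1).
  exists nil; split=> // x; split; first by move=> Jx; split=> //; exact: ideal_sub HJ Jx.
  by case=> Ax _; rewrite -[x]mulr1; exact: idealMl HJ Ax J1.
have [Jprime|notprime] := classic (forall x y, A x -> A y -> J (x * y) -> J x \/ J y).
  exists [:: J]; split; first by move=> P [<-|[]].
  move=> x; split; last by case=> _; apply; left.
  by move=> Jx; split=> [|P [<-|[]]] //; exact: ideal_sub HJ Jx.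
have [x [y [Ax [Ay [Jxy [nJx nJy]]]]]] :
    exists x y, A x /\ A y /\ J (x * y) /\ ~ J x /\ ~ J y.
  apply: NNPP => none; apply: notprime => x y Ax Ay Jxy; apply: NNPP => nJ; apply: none.
  by exists x, y; tauto.
have [Lx [Px Ex]] := IH _ (rad_add_radical x HJ) (rad_add_sub x HJ)
  (ex_intro _ x (conj (rad_add_gen HJ Ax) nJx)).
have [Ly [Py Ey]] := IH _ (rad_add_radical y HJ) (rad_add_sub y HJ)
  (ex_intro _ y (conj (rad_add_gen HJ Ay) nJy)).
exists (Lx ++ Ly); split.
  by move=> P /(List.in_app_or _ _ _)[]; [exact: Px | exact: Py].
move=> z; split.
  move=> Jz; split=> [|P /(List.in_app_or _ _ _)[HP|HP]]; first exact: ideal_sub HJ Jz.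
    by have [_] := (Ex z).1 (rad_add_sub x HJ Jz); apply.
  by have [_] := (Ey z).1 (rad_add_sub y HJ Jz); apply.
case=> Az Lz; apply: (rad_add_meet HJr Ax Ay Jxy).
  by apply/Ex; split=> // P HP; apply: Lz; apply: List.in_or_app; left.
by apply/Ey; split=> // P HP; apply: Lz; apply: List.in_or_app; right.
Qed.

Lemma radical_ideal_prime_over J : radical_ideal A J -> ~ J 1 ->
  exists2 Q, prime_ideal A Q & forall x, J x -> Q x.
Proof.
move=> HJ nJ1; have [[|Q L] [HLp HLe]] := radical_ideal_decomp HJ.
  by case: nJ1; apply/HLe; split=> //; exact: subring1 HA.
exists Q; first exact: HLp Q (or_introl erefl).
by move=> x /HLe[_]; apply; left.
Qed.

End NoetherianSpectrum.

Section FiniteType.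
Variables (A : K -> Prop) (HA : subring A).

Lemma adjoin_den_radical (s : seq K) c b : A c -> (forall g, g \in s -> A (c * g)) ->
  adjoin A s b -> den_radical A b c.
Proof.
move=> Ac Acs; elim=> [a Aa | x sx | x _ [_ [m Am]]
  | x y _ [_ [m Am]] _ [_ [k Ak]] | x y _ [_ [m Am]] _ [_ [k Ak]]]; split=> //.
- by exists 0%N; rewrite expr0 mul1r.
- by exists 1%N; rewrite expr1; exact: Acs.
- by exists m; rewrite mulrN; exact: subringN HA Am.
- exists (m + k)%N.
  have -> : c ^+ (m + k) * (x + y) = c ^+ k * (c ^+ m * x) + c ^+ m * (c ^+ k * y).
    by rewrite exprD; ring.
  exact: subringD HA (subringM HA (subringX k HA Ac) Am) (subringM HA (subringX m HA Ac) Ak).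
- exists (m + k)%N.
  have -> : c ^+ (m + k) * (x * y) = (c ^+ m * x) * (c ^+ k * y) by rewrite exprD; ring.
  exact: subringM HA Am Ak.
Qed.

Lemma loc_at_common_den P (s : seq K) : prime_ideal A P ->
  (forall g, g \in s -> loc_at A P g) ->
  exists c, A c /\ ~ P c /\ forall g, g \in s -> A (c * g).
Proof.
move=> HP; elim: s => [|g s IH] Ls.
  by exists 1; split; [exact: subring1 HA | split=> //; exact: HP.2.1].
have /IH [c [Ac [nPc Acs]]] : forall g', g' \in s -> loc_at A P g'.
  by move=> g' sg'; apply: Ls; rewrite in_cons sg' orbT.
have [d [Ad [nPd Adg]]] := Ls g (mem_head g s).
exists (d * c); split; first exact: subringM HA Ad Ac.
split; first exact: prime_idealM_notin HP Ad Ac nPd nPc.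
move=> g'; rewrite in_cons => /predU1P[->|sg'].
  by rewrite mulrAC; exact: subringM HA Adg Ac.
by rewrite -mulrA; exact: subringM HA Ad (Acs g' sg').
Qed.

Variables (B : K -> Prop) (HB : subring B) (AB : forall x, A x -> B x).

Lemma fg_algebra_notin_loc_at P : fg_algebra A B -> prime_ideal A P ->
  (forall z, common_den_radical A B z -> P z) -> exists y, B y /\ ~ loc_at A P y.
Proof.
move=> [s Hs] HP RP; apply: NNPP => none.
have [|c [Ac [nPc Acs]]] := loc_at_common_den (s := s) HP.
  move=> g sg; apply: NNPP => nLg; apply: none; exists g; split=> //.
  by apply/Hs; exact: adj_gen.
apply: nPc; apply: RP; split=> // b /Hs; exact: adjoin_den_radical Ac Acs.
Qed.

Lemma localization_of_den_unit u : unit_of B u -> common_den_radical A B u ->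
  localization_of A B.
Proof.
move=> [Bu [u0 Bui]] [Au Ru].
exists (fun s => A s /\ s != 0 /\ B s^-1); split; first by move=> s [As [s0 _]].
split.
  by split; [exact: subring1 HA | split; [exact: oner_neq0 | rewrite invr1; exact: subring1 HB]].
split.
  move=> s t [As [s0 Bs]] [At [t0 Bt]]; split; first exact: subringM HA As At.
  by split; [rewrite mulf_neq0 | rewrite invfM; exact: subringM HB Bs Bt].
move=> x; split.
  move=> Bx; have [_ [m Aum]] := Ru x Bx.
  exists (u ^+ m * x), (u ^+ m); split=> //; split; last by field; rewrite expf_neq0.
  split; first exact: subringX m HA Au.
  by split; [rewrite expf_neq0 | rewrite -exprVn; exact: subringX m HB Bui].
by case=> a [s [Aa [[_ [_ Bs]] ->]]]; exact: subringM HB (AB Aa) Bs.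
Qed.

Lemma localization_well_centered : localization_of A B -> well_centered A B.
Proof.
move=> [S [HS [S1 [_ BS]]]] b /BS [a [s [Aa [Ss ->]]]]; have [As s0] := HS s Ss.
exists s; split; last by rewrite mulrC divfK.
split; first by apply/BS; exists s, 1; split=> //; split; [exact: S1 | rewrite divr1].
split=> //; apply/BS; exists 1, s; split; first exact: subring1 HA.
by split=> //; rewrite div1r.
Qed.

End FiniteType.

Lemma well_centered_almost A B : well_centered A B -> almost_well_centered A B.
Proof. by move=> wc b /wc [u [Hu Aub]]; exists 1%N, u. Qed.

Section AlmostWellCentered.
Variables (A B : K -> Prop) (HA : subring A) (Hff : is_fraction_field A)
  (Hpr : prufer A) (HN : noetherian_spectrum A).
Variables (L : list (K -> Prop)) (b u : K) (n : nat).
Hypotheses (HLp : forall P, List.In P L -> prime_ideal A P)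
  (HLe : forall x, common_den_radical A B x <-> A x /\ forall P, List.In P L -> P x)
  (Lb : forall P, List.In P L -> ~ loc_at A P b)
  (n0 : (0 < n)%N) (Hu : unit_of B u) (Aubn : A (u * b ^+ n)).

Lemma prime_over_mulX_unit Q : prime_ideal A Q ->
  (exists2 P, List.In P L & forall x, P x -> Q x) ->
  exists s, A s /\ ~ Q s /\ Q (s ^+ n * u).
Proof.
move=> HQ [P HP PQ]; apply: (notin_loc_at_mulX HA Hff Hpr HQ _ n0 Aubn).
by move=> /(loc_at_anti PQ); exact: Lb.
Qed.

(* A prime Q over the radical of the denominator ideal of u either misses some
   d in R, absurd as d^m u lies in A, or contains R and hence some P_i; then
   s^n u lies in Q for some s outside Q, absurd again. *)
Lemma unit_in_base : A u.
Proof.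
apply: NNPP => nAu.
have nD1 : ~ den_radical A u 1 by case=> _ [k]; rewrite expr1n mul1r.
have [Q HQ DQ] := radical_ideal_prime_over HA HN (den_radical_radical u HA) nD1.
have in_Q z : A z -> A (z * u) -> Q z.
  by move=> Az Azu; apply: DQ; split=> //; exists 1%N; rewrite expr1.
have [[z [Rz nQz]]|RQ] := classic (exists z, common_den_radical A B z /\ ~ Q z).
  have [Az [m Azm]] := Rz.2 u Hu.1.
  apply: nQz; apply: (prime_ideal_expr HA HQ Az (n := m)).
  exact: in_Q (subringX m HA Az) Azm.
have [|s [As [nQs Qsu]]] := prime_over_mulX_unit HQ.
  apply: (prime_ideal_over_meet HA HQ (fun P HP => (HLp HP).1)) => x Ax Lx.
  by apply: NNPP => nQx; apply: RQ; exists x; split=> //; exact/HLe.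
apply: nQs; apply: (prime_ideal_expr HA HQ As (n := n)).
exact: in_Q (subringX n HA As) (ideal_sub HQ.1 Qsu).
Qed.

Lemma unit_in_common_den : common_den_radical A B u.
Proof.
apply/HLe; split=> [|P HP]; first exact: unit_in_base.
have HPp := HLp HP.
have [s [As [nPs Psu]]] := prime_over_mulX_unit HPp (ex_intro2 _ _ P HP (fun x Px => Px)).
case: (HPp.2.2 _ _ (subringX n HA As) unit_in_base Psu) => // Psn.
by case: nPs; exact: prime_ideal_expr HA HPp As Psn.
Qed.

End AlmostWellCentered.

Lemma almost_well_centered_localization A B : subring A -> is_fraction_field A ->
  prufer A -> noetherian_spectrum A -> overring A B -> fg_algebra A B ->
  almost_well_centered A B -> localization_of A B.
Proof.
move=> HA Hff Hpr HN [HB AB] Hfg awc.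
have [L [HLp HLe]] := radical_ideal_decomp HA HN (common_den_radical_radical B HA).
have [b [Bb Lb]] : exists b, B b /\ forall P, List.In P L -> ~ loc_at A P b.
  apply: (loc_at_avoid HA Hff Hpr HB) => P HP; split; first exact: HLp.
  by apply: (fg_algebra_notin_loc_at HA Hfg (HLp _ HP)) => z /HLe[_]; apply.
have [n [u [n0 [Hu Aubn]]]] := awc b Bb.
exact: (localization_of_den_unit HA HB AB Hu
  (unit_in_common_den HA Hff Hpr HN HLp HLe Lb n0 Hu Aubn)).
Qed.

End Overrings.

Theorem theorem4p5 (K : fieldType) (A B : K -> Prop) :
  subring A -> is_fraction_field A -> prufer A -> noetherian_spectrum A ->
  overring A B -> fg_algebra A B ->
  (localization_of A B <-> well_centered A B) /\
  (well_centered A B <-> almost_well_centered A B).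
Proof.
move=> HA Hff Hpr HN Hov Hfg.
have awc_loc := almost_well_centered_localization HA Hff Hpr HN Hov Hfg.
have loc_wc := localization_well_centered HA (B := B).
have wc_awc := @well_centered_almost K A B.
by split; split; auto.
Qed.
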